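(* Let $$A= \begin{pmatrix} 1& -2& 2\\ 2&-1& 2\\ 2&-2& 3 \end{pmatrix}.$$ For every positive integer $n$, the triple $A^n(3,4,5)^\top$ is a primitive Pythagorean triple $(x,y,z)$, and the inradius of the triangle with side lengths $x,y,z$ is $n+1$.
   Context: A primitive Pythagorean triple is a triple $(x,y,z)$ of positive integers with $x^2+y^2=z^2$, $\gcd(x,y)=1$ and $x$ odd. Triples are regarded as row vectors and $\top$ denotes transpose. *)

From mathcomp Require Import all_boot all_order all_algebra.
Set Implicit Arguments. Unset Strict Implicit. Unset Printing Implicit Defensive.
Import Order.TTheory GRing.Theory Num.Theory.
Local Open Scope ring_scope.

Definition matA : 'M[int]_3 :=
  \matrix_(i < 3, j < 3)
    (nth 0 (nth [::] [:: [:: 1; -2; 2]; [:: 2; -1; 2]; [:: 2; -2; 3]] i) j : int).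

Definition v345 : 'cV[int]_3 := \col_(i < 3) (nth 0 [:: 3; 4; 5] i : int).

Definition primitive_pyth (x y z : int) : Prop :=
  [/\ (0 < x) && (0 < y) && (0 < z), x ^+ 2 + y ^+ 2 = z ^+ 2,
      gcdz x y = 1 & ~~ (2 %| x)%Z].

(* Inradius of a triangle with side lengths a, b, c (Heron):
   r = sqrt((s-a)(s-b)(s-c)/s), s the semiperimeter. *)
Definition inradius (R : rcfType) (a b c : R) : R :=
  let s := (a + b + c) / 2 in Num.sqrt ((s - a) * (s - b) * (s - c) / s).

From mathcomp Require Import all_boot all_order all_algebra ring lra zify.
Import Order.TTheory GRing.Theory Num.Theory.
Local Open Scope ring_scope.

(* A maps the triple (2m+1, 2m(m+1), 2m(m+1)+1), whose hypotenuse exceeds the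
   even leg by one, to the next member m+1 of the same family, and (3,4,5) is
   its member m = 1.  These triples are primitive (x^2 - 2y = 1 is a Bezout
   relation), and a right triangle with legs a, b and hypotenuse c has
   inradius (a + b - c)/2, which here is m. *)

Lemma inradius_right (R : rcfType) (a b c : R) :
  0 < a -> 0 < b -> 0 < c -> a ^+ 2 + b ^+ 2 = c ^+ 2 ->
  inradius a b c = (a + b - c) / 2.
Proof.
move=> a_gt0 b_gt0 c_gt0 pyth; rewrite /inradius.
set s := (a + b + c) / 2.
have s_neq0 : s != 0 by rewrite gt_eqF // /s; lra.
have legs : (s - a) * (s - b) = s * (s - c).
  apply/eqP; rewrite -subr_eq0.
  have -> : (s - a) * (s - b) - s * (s - c) = (c ^+ 2 - (a ^+ 2 + b ^+ 2)) / 2.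
    by rewrite /s; field.
  by rewrite pyth subrr mul0r.
have -> : (s - a) * (s - b) * (s - c) / s = (s - c) ^+ 2.
  by rewrite legs; field.
have c_le_ab : c <= a + b by nra.
by rewrite sqrtr_sqr ger0_norm /s; [field | lra].
Qed.

Definition pyth_col (m : int) : 'cV[int]_3 :=
  \col_(i < 3) nth 0 [:: 2 * m + 1; 2 * m * (m + 1); 2 * m * (m + 1) + 1] i.

Lemma matA_pyth_col (m : int) : matA *m pyth_col m = pyth_col (m + 1).
Proof.
apply/matrixP=> i j; rewrite !mxE !big_ord_recl big_ord0 !mxE /=.
by case: i => [[|[|[|]]] ?] //=; ring.
Qed.

Lemma matA_pow_v345 (n : nat) : matA ^+ n *m v345 = pyth_col n.+1.
Proof.
elim: n => [|n IH].
  rewrite expr0 mul1mx; apply/matrixP=> i j; rewrite !mxE.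
  by case: i => [[|[|[|]]] ?].
by rewrite exprS -mulmxA IH matA_pyth_col -[n.+2]addn1 PoszD.
Qed.

Lemma primitive_pyth_col (m : int) : 0 < m ->
  primitive_pyth (2 * m + 1) (2 * m * (m + 1)) (2 * m * (m + 1) + 1).
Proof.
move=> m_gt0; split.
- by apply/andP; split; [apply/andP; split|]; lia.
- by ring.
- by apply/eqP/coprimezP; exists (2 * m + 1, -2) => /=; ring.
- by lia.
Qed.

Lemma inradius_pyth_col (R : rcfType) (m : int) : 0 < m ->
  inradius ((2 * m + 1)%:~R : R) (2 * m * (m + 1))%:~R (2 * m * (m + 1) + 1)%:~R
  = m%:~R.
Proof.
move=> m_gt0.
have [/andP[/andP[x_gt0 y_gt0] z_gt0] pyth _ _] := primitive_pyth_col m m_gt0.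
rewrite inradius_right ?ltr0z // -?rmorphXn -?rmorphD ?pyth //.
by rewrite !(rmorphD, rmorphM) /=; field.
Qed.

Theorem mainTheorem2 (R : rcfType) (n : nat) : (0 < n)%N ->
  let v := (matA ^+ n *m v345) in
  let x := v 0 0 in let y := v 1 0 in let z := v 2 0 in
  primitive_pyth x y z /\
  inradius (x%:~R : R) (y%:~R) (z%:~R) = (n + 1)%:R.
Proof.
move=> _ v x y z.
rewrite /x /y /z /v matA_pow_v345 !mxE /= addn1.
by split; [exact: primitive_pyth_col | exact: inradius_pyth_col].
Qed.
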